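(* For any aggregator $f:[0,1]^2\to[0,1]$ and any $\lambda\in(0,1]$, $$R_\lambda(f)=\sup_{\theta\in\Theta_4}\mathbb E_\theta\big[L(f(\mathbf x(\mathbf s,\lambda)),\omega)-L(f^*(\mathbf s),\omega)\big],$$ where $\Theta_4\subseteq\Theta$ is the set of conditionally independent structures in which each expert has exactly two possible signals, $\mathcal S_1=\mathcal S_2=\{r,b\}$.
   Context: Setting: a binary world state $\omega\in\{0,1\}$ and two experts. An information structure $\theta$ consists of a prior $\mu=\Pr[\omega=1]\in(0,1)$ and finite signal spaces $\mathcal S_1,\mathcal S_2$ with a joint distribution of $(\omega,S_1,S_2)$ under which $S_1,S_2$ are conditionally independent given $\omega$; $\Theta$ is the set of all such structures. For $\lambda\in(0,1]$, expert $i$ with signal $s_i$ reports $x_i(s_i,\lambda)=\frac{\mu^\lambda\Pr[S_i=s_i\mid\omega=1]}{\mu^\lambda\Pr[S_i=s_i\mid\omega=1]+(1-\mu)^\lambda\Pr[S_i=s_i\mid\omega=0]}$, and $\mathbf x(\mathbf s,\lambda)=(x_1(s_1,\lambda),x_2(s_2,\lambda))$. $f^*(\mathbf s)=\Pr_\theta[\omega=1\mid S_1=s_1,S_2=s_2]$. The loss is $L(y,\omega)=(y-\omega)^2$. The regret is $R_\lambda(f)=\sup_{\theta\in\Theta}\mathbb E_\theta[L(f(\mathbf x(\mathbf s,\lambda)),\omega)-L(f^*(\mathbf s),\omega)]$. *)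

From HB Require Import structures.
From mathcomp Require Import all_boot all_order all_algebra.
From mathcomp Require Import all_classical all_reals all_analysis.
Unset Printing Implicit Defensive.
Import Order.TTheory GRing.Theory Num.Theory.
Local Open Scope ring_scope.
Local Open Scope classical_set_scope.

(* World state omega : bool (true <-> omega = 1).
   An information structure: prior mu = Pr[omega=1] in (0,1), finite signal
   spaces 'I_nS1, 'I_nS2, and likelihoods lik_i w s = Pr[S_i = s | omega = w].
   Conditional independence: Pr[w,s1,s2] = Pr[w] * lik1 w s1 * lik2 w s2. *)
Record infoStruct (R : realType) := InfoStruct {
  nS1 : nat; nS2 : nat;
  prior : R;
  lik1 : bool -> 'I_nS1 -> R;
  lik2 : bool -> 'I_nS2 -> R;
  prior_gt0 : 0 < prior;
  prior_lt1 : prior < 1;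
  lik1_ge0 : forall w s, 0 <= lik1 w s;
  lik1_sum : forall w, \sum_(s < nS1) lik1 w s = 1;
  lik2_ge0 : forall w s, 0 <= lik2 w s;
  lik2_sum : forall w, \sum_(s < nS2) lik2 w s = 1 }.

Section Defs.
Variable R : realType.

Definition priorOf (th : infoStruct R) (w : bool) : R :=
  if w then prior R th else 1 - prior R th.

Definition jointP (th : infoStruct R) (w : bool) (s1 : 'I_(nS1 R th)) (s2 : 'I_(nS2 R th)) : R :=
  priorOf th w * @lik1 R th w s1 * @lik2 R th w s2.

Definition report (mu : R) (n : nat) (lik : bool -> 'I_n -> R) (s : 'I_n) (lam : R) : R :=
  mu `^ lam * lik true s / (mu `^ lam * lik true s + (1 - mu) `^ lam * lik false s).

Definition x1 (th : infoStruct R) (s1 : 'I_(nS1 R th)) (lam : R) : R :=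
  report (prior R th) (nS1 R th) (lik1 R th) s1 lam.
Definition x2 (th : infoStruct R) (s2 : 'I_(nS2 R th)) (lam : R) : R :=
  report (prior R th) (nS2 R th) (lik2 R th) s2 lam.

Definition fstar (th : infoStruct R) (s1 : 'I_(nS1 R th)) (s2 : 'I_(nS2 R th)) : R :=
  jointP th true s1 s2 / (jointP th true s1 s2 + jointP th false s1 s2).

Definition sqloss (y : R) (w : bool) : R := (y - (w%:R : R)) ^+ 2.

Definition excessLoss (f : R -> R -> R) (lam : R) (th : infoStruct R) : R :=
  \sum_(w : bool) \sum_(s1 < nS1 R th) \sum_(s2 < nS2 R th)
    jointP th w s1 s2 *
      (sqloss (f (x1 th s1 lam) (x2 th s2 lam)) w - sqloss (fstar th s1 s2) w).

Definition regret (f : R -> R -> R) (lam : R) : \bar R :=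
  ereal_sup [set (excessLoss f lam th)%:E | th in [set: infoStruct R]].

Definition Theta4 : set (infoStruct R) := [set th | nS1 R th = 2%N /\ nS2 R th = 2%N].

End Defs.

From HB Require Import structures.
From mathcomp Require Import all_boot all_order all_algebra.
From mathcomp Require Import all_classical all_reals all_analysis.
From mathcomp Require Import ring lra.
Import Order.TTheory GRing.Theory Num.Theory.
Local Open Scope classical_set_scope.
Local Open Scope ring_scope.

(** The excess loss is a sum, over the signals s of expert 1, of a term
    Phi(Pr[s | omega = 1], Pr[s | omega = 0]) that is positively homogeneous of
    degree one, since the report and the posterior only see the likelihood ratio.
    Two signals whose likelihood ratios lie on opposite sides of 1 can be rescaled
    into a two-signal expert; weighting the resulting inequalities by the
    likelihood differences and summing over all such pairs bounds the sum over
    any number of signals by the supremum over two-signal experts. This reduces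
    expert 1, and then expert 2 after exchanging the roles of the experts. *)

Lemma divf_mul2l (F : fieldType) (k x y : F) : k != 0 -> (k * x) / (k * y) = x / y.
Proof. by move=> k0; rewrite invfM mulrACA divff // mul1r. Qed.

Lemma big_ord2 (V : nmodType) (F : 'I_2 -> V) : \sum_(s < 2) F s = F ord0 + F ord_max.
Proof. by rewrite big_ord_recl big_ord1; congr (_ + F _); apply: val_inj. Qed.

Lemma sumr_le0_of_pairwise (R : realDomainType) (n : nat) (d u : 'I_n -> R) :
  \sum_(s < n) d s = 0 ->
  (forall i j, d i <= 0 -> 0 < d j -> d j * u i <= d i * u j) ->
  (forall i, d i = 0 -> u i <= 0) ->
  \sum_(s < n) u s <= 0.
Proof.
move=> sd0 pair zero.
have split_sign (F : 'I_n -> R) :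
    \sum_(s < n) F s = \sum_(s < n | 0 < d s) F s + \sum_(s < n | d s <= 0) F s.
  by rewrite (bigID (fun s => 0 < d s)); congr (_ + _); apply: eq_bigl => s; rewrite leNgt.
pose D := \sum_(j < n | 0 < d j) d j.
have sdneg : \sum_(i < n | d i <= 0) d i = - D.
  by apply/eqP; rewrite -addr_eq0 addrC -split_sign sd0.
have D_u : D * \sum_(s < n) u s <= 0.
  have : \sum_(i < n | d i <= 0) \sum_(j < n | 0 < d j) (d j * u i - d i * u j) <= 0.
    by apply: sumr_le0 => i di; apply: sumr_le0 => j dj; rewrite subr_le0 pair.
  under eq_bigr do rewrite sumrB -mulr_suml -mulr_sumr.
  by rewrite sumrB -mulr_sumr -mulr_suml sdneg mulNr opprK -mulrDr addrC -split_sign.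
have D_ge0 : 0 <= D by apply: sumr_ge0 => j /ltW.
have [D0|D_neq0] := eqVneq D 0; last by move: D_u; rewrite pmulr_rle0 // lt_def D_neq0.
apply: sumr_le0 => i _; apply: zero.
have dneg0 : \sum_(s < n | d s <= 0) - d s = 0 by rewrite sumrN sdneg opprK.
have [di_gt0|di_le0] := ltrP 0 (d i).
  exact: (psumr_eq0P (fun j => @ltW _ _ _ _) D0).
have dneg_ge0 j : d j <= 0 -> 0 <= - d j by rewrite oppr_ge0.
by apply/eqP; rewrite -oppr_eq0 (psumr_eq0P dneg_ge0 dneg0).
Qed.

Section TwoSignalReduction.
Variables (R : realFieldType) (Phi : R -> R -> R) (M : R).
Hypothesis Phi_homog : forall k x y, 0 < k -> Phi (k * x) (k * y) = k * Phi x y.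
Hypothesis Phi00 : Phi 0 0 = 0.
Hypothesis Phi_two_signal : forall a b : 'I_2 -> R,
  (forall s, 0 <= a s) -> (forall s, 0 <= b s) ->
  \sum_(s < 2) a s = 1 -> \sum_(s < 2) b s = 1 ->
  \sum_(s < 2) Phi (a s) (b s) <= M.

Let gap x y := 2 * Phi x y - M * (x + y).

Lemma Phi_homogW k x y : 0 <= k -> Phi (k * x) (k * y) = k * Phi x y.
Proof.
rewrite le_eqVlt => /orP[/eqP <-|]; last exact: Phi_homog.
by rewrite !mul0r Phi00.
Qed.

Lemma Phi_pair_le x1 y1 x2 y2 : 0 <= x1 -> 0 <= y1 -> 0 <= x2 -> 0 <= y2 ->
  x1 + x2 = 1 -> y1 + y2 = 1 -> Phi x1 y1 + Phi x2 y2 <= M.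
Proof.
move=> x1_ge0 y1_ge0 x2_ge0 y2_ge0 sx sy.
pose a (s : 'I_2) := if val s == 0%N then x1 else x2.
pose b (s : 'I_2) := if val s == 0%N then y1 else y2.
have a_ge0 s : 0 <= a s by rewrite /a; case: ifP.
have b_ge0 s : 0 <= b s by rewrite /b; case: ifP.
have := Phi_two_signal _ _ a_ge0 b_ge0.
by rewrite !big_ord2; apply.
Qed.

Lemma gap_diag x : 0 <= x -> gap x x <= 0.
Proof.
move=> x_ge0; rewrite /gap -[x]mulr1 Phi_homogW // -mulrDr.
have := @Phi_pair_le 1 1 0 0.
rewrite Phi00 !addr0 ler01 lexx => /(_ isT isT isT isT erefl erefl) Phi11.
nra.
Qed.

Lemma gap_mix xi yi xj yj : 0 <= xi <= yi -> 0 <= yj < xj ->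
  (xj - yj) * gap xi yi <= (xi - yi) * gap xj yj.
Proof.
move=> /andP[xi_ge0 xi_le] /andP[yj_ge0 yj_lt].
have [yi0|yi_neq0] := eqVneq yi 0.
  have xi0 : xi = 0 by apply/le_anti; rewrite xi_ge0 -yi0 xi_le.
  by rewrite /gap xi0 yi0 Phi00 !(subrr, addr0, mulr0, mul0r).
have yi_gt0 : 0 < yi by rewrite lt_def yi_neq0 (le_trans xi_ge0 xi_le).
pose D := xj * yi - xi * yj.
have D_gt0 : 0 < D.
  rewrite /D subr_gt0 (@le_lt_trans _ _ (yi * yj)) //.
    by rewrite ler_wpM2r.
  by rewrite mulrC ltr_pM2r.
(* p (xi, yi) + q (xj, yj) = (1, 1): the rescaled signals i and j form a two-signal expert. *)
pose p := (xj - yj) / D; pose q := (yi - xi) / D.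
have p_ge0 : 0 <= p by apply: divr_ge0; [rewrite subr_ge0; exact: ltW | exact: ltW].
have q_ge0 : 0 <= q by apply: divr_ge0; [rewrite subr_ge0 | exact: ltW].
have D_neq0 : D != 0 by rewrite gt_eqF.
have := @Phi_pair_le (p * xi) (p * yi) (q * xj) (q * yj).
rewrite !Phi_homogW //.
have yi_ge0 := le_trans xi_ge0 xi_le; have xj_ge0 := le_trans yj_ge0 (ltW yj_lt).
move=> /(_ (mulr_ge0 p_ge0 xi_ge0) (mulr_ge0 p_ge0 yi_ge0)).
move=> /(_ (mulr_ge0 q_ge0 xj_ge0) (mulr_ge0 q_ge0 yj_ge0)).
have sum_x : p * xi + q * xj = 1 by rewrite /p /q /D; field.
have sum_y : p * yi + q * yj = 1 by rewrite /p /q /D; field.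
move=> /(_ sum_x sum_y) Phi_mix.
rewrite -subr_ge0.
have -> : (xi - yi) * gap xj yj - (xj - yj) * gap xi yi
    = 2 * D * (M - (p * Phi xi yi + q * Phi xj yj)).
  by rewrite /gap /p /q /D; field.
by apply: mulr_ge0; [rewrite mulr_ge0 // ltW | rewrite subr_ge0].
Qed.

Lemma sum_Phi_le n (a b : 'I_n -> R) :
  (forall s, 0 <= a s) -> (forall s, 0 <= b s) ->
  \sum_(s < n) a s = 1 -> \sum_(s < n) b s = 1 ->
  \sum_(s < n) Phi (a s) (b s) <= M.
Proof.
move=> a_ge0 b_ge0 sa sb.
have sum_gap : \sum_(s < n) gap (a s) (b s) = 2 * (\sum_(s < n) Phi (a s) (b s) - M).
  rewrite /gap sumrB -!mulr_sumr big_split /= sa sb; ring.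
suff : \sum_(s < n) gap (a s) (b s) <= 0 by rewrite sum_gap pmulr_rle0 // subr_le0.
apply: (@sumr_le0_of_pairwise _ _ (fun s => a s - b s)).
- by rewrite sumrB sa sb subrr.
- move=> i j; rewrite subr_le0 subr_gt0 => le_ab lt_ba.
  by apply: gap_mix; rewrite ?a_ge0 ?b_ge0.
- by move=> i /eqP; rewrite subr_eq0 => /eqP->; apply: gap_diag.
Qed.

End TwoSignalReduction.

Lemma ereal_sup_image_eq (R : realType) (T : Type) (S : set T) (g : T -> R) :
  (forall t M, (forall t', S t' -> g t' <= M) -> g t <= M) ->
  ereal_sup [set (g t)%:E | t in [set: T]] = ereal_sup [set (g t)%:E | t in S].
Proof.
move=> g_le; apply/le_anti/andP; split; last first.
  by apply: ereal_sup_le => _ [t St <-]; exists t.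
apply: ge_ereal_sup => _ [t _ <-].
have ub t' : S t' -> ((g t')%:E <= ereal_sup [set (g t)%:E | t in S])%E.
  by move=> St'; apply: ereal_sup_ubound; exists t'.
move: ub; case: (ereal_sup _) => [r| |] ub.
- by rewrite lee_fin; apply: g_le => t' /ub; rewrite lee_fin.
- by rewrite leey.
- have : g t <= g t - 1 by apply: g_le => t' /ub; rewrite leeNy_eq.
  by move=> ?; exfalso; lra.
Qed.

Section Experts.
Variables (R : realType) (lam : R).
Implicit Types (f : R -> R -> R) (th : infoStruct R).

Definition report_at (mu al be : R) : R :=
  mu `^ lam * al / (mu `^ lam * al + (1 - mu) `^ lam * be).

Definition signal_joint th (al be : R) (w : bool) (s2 : 'I_(nS2 R th)) : R :=
  priorOf R th w * (if w then al else be) * lik2 R th w s2.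

Definition expert1_excess f th (al be : R) : R :=
  \sum_(w : bool) \sum_(s2 < nS2 R th) signal_joint th al be w s2 *
    (sqloss R (f (report_at (prior R th) al be) (x2 R th s2 lam)) w
     - sqloss R (signal_joint th al be true s2
                 / (signal_joint th al be true s2 + signal_joint th al be false s2)) w).

Lemma excessLoss_expert1 f th : excessLoss R f lam th =
  \sum_(s1 < nS1 R th) expert1_excess f th (lik1 R th true s1) (lik1 R th false s1).
Proof.
rewrite /excessLoss exchange_big /=; apply: eq_bigr => s1 _.
by apply: eq_bigr => -[] _; apply: eq_bigr.
Qed.

Lemma report_at_homog mu k al be : 0 < k -> report_at mu (k * al) (k * be) = report_at mu al be.
Proof.
move=> k_gt0; rewrite /report_at [_ * (k * al)]mulrCA [_ * (k * be)]mulrCA.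
by rewrite -mulrDr divf_mul2l // gt_eqF.
Qed.

Lemma signal_joint_homog th k al be w s2 :
  signal_joint th (k * al) (k * be) w s2 = k * signal_joint th al be w s2.
Proof. by rewrite /signal_joint; case: w; ring. Qed.

Lemma expert1_excess_homog f th k al be : 0 < k ->
  expert1_excess f th (k * al) (k * be) = k * expert1_excess f th al be.
Proof.
move=> k_gt0; rewrite /expert1_excess report_at_homog // mulr_sumr.
apply: eq_bigr => w _; rewrite mulr_sumr; apply: eq_bigr => s2 _.
by rewrite !signal_joint_homog -mulrDr divf_mul2l ?mulrA // gt_eqF.
Qed.

Lemma expert1_excess00 f th : expert1_excess f th 0 0 = 0.
Proof.
rewrite /expert1_excess big1 // => w _; rewrite big1 // => s2 _.
by rewrite /signal_joint; case: w; rewrite !(mulr0, mul0r).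
Qed.

Definition swap_experts th : infoStruct R :=
  @InfoStruct R _ _ _ _ _ (prior_gt0 R th) (prior_lt1 R th)
    (lik2_ge0 R th) (lik2_sum R th) (lik1_ge0 R th) (lik1_sum R th).

Lemma excessLoss_swap f th :
  excessLoss R f lam th = excessLoss R (fun x y => f y x) lam (swap_experts th).
Proof.
rewrite /excessLoss; apply: eq_bigr => w _; rewrite exchange_big /=.
apply: eq_bigr => s2 _; apply: eq_bigr => s1 _.
by rewrite /fstar /jointP /= ![_ * lik1 R th _ _ * _]mulrAC.
Qed.

Definition replace_expert1 th {n} {lik : bool -> 'I_n -> R}
    (lik_ge0 : forall w s, 0 <= lik w s) (lik_sum : forall w, \sum_(s < n) lik w s = 1) :
    infoStruct R :=
  @InfoStruct R _ _ _ _ _ (prior_gt0 R th) (prior_lt1 R th)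
    lik_ge0 lik_sum (lik2_ge0 R th) (lik2_sum R th).

Lemma reduce_expert1 f th M :
  (forall th', nS1 R th' = 2 -> nS2 R th' = nS2 R th -> excessLoss R f lam th' <= M) ->
  excessLoss R f lam th <= M.
Proof.
move=> le_M; rewrite excessLoss_expert1.
apply: (@sum_Phi_le _ _ M (expert1_excess_homog f th) (expert1_excess00 f th));
  try exact: lik1_ge0; try exact: lik1_sum.
move=> a b a_ge0 b_ge0 sa sb.
pose lik w := if w then a else b.
have lik_ge0 w s : 0 <= lik w s by case: w.
have lik_sum w : \sum_(s < 2) lik w s = 1 by case: w.
by have := le_M (replace_expert1 th lik_ge0 lik_sum) erefl erefl; rewrite excessLoss_expert1.
Qed.

Lemma excessLoss_le_Theta4 f th M :
  (forall th', Theta4 R th' -> excessLoss R f lam th' <= M) -> excessLoss R f lam th <= M.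
Proof.
move=> le_M; apply: reduce_expert1 => th1 th1_2 _.
rewrite excessLoss_swap; apply: reduce_expert1 => th2 th2_2 th2_th1.
by rewrite excessLoss_swap; apply: le_M; split; rewrite /= ?th2_th1.
Qed.

End Experts.

Theorem mainTheorem2 (R : realType) (f : R -> R -> R) (lam : R)
  (hf : forall x y : R, 0 <= x <= 1 -> 0 <= y <= 1 -> 0 <= f x y <= 1)
  (hlam : 0 < lam <= 1) :
  regret R f lam = ereal_sup [set (excessLoss R f lam th)%:E | th in Theta4 R].
Proof.
apply: ereal_sup_image_eq => th M.
exact: excessLoss_le_Theta4.
Qed.
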